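(* (Height-preserving inversion.) For all $n\geq1$, finite multisets of formulas $\Gamma,\Delta$, formulas $\phi,\psi$, classical formulas $\alpha$, and finite multisets $\Xi$ of classical formulas: (L$\neg$) $\vdash^n\Gamma,\neg\alpha\Rightarrow\Delta$ implies $\vdash^n\Gamma\Rightarrow\alpha,\Delta$; (R$\neg$) $\vdash^n\Gamma\Rightarrow\neg\alpha,\Delta$ implies $\vdash^n\Gamma,\alpha\Rightarrow\Delta$; (L$\wedge$) $\vdash^n\Gamma,\phi\wedge\psi\Rightarrow\Delta$ implies $\vdash^n\Gamma,\phi,\psi\Rightarrow\Delta$; (R$\wedge$) $\vdash^n\Gamma\Rightarrow\phi\wedge\psi,\Delta$ implies $\vdash^n\Gamma\Rightarrow\phi,\Delta$ and $\vdash^n\Gamma\Rightarrow\psi,\Delta$; (L$\vee$) $\vdash^n\Gamma,\phi\vee\psi\Rightarrow\Delta$ implies $\vdash^n\Gamma,\phi\Rightarrow\Delta$ and $\vdash^n\Gamma,\psi\Rightarrow\Delta$; (R$\vee$) $\vdash^n\Gamma\Rightarrow\phi\vee\psi,\Delta$ implies $\vdash^n\Gamma\Rightarrow\phi,\psi,\Delta$; (L$\mathbin{\backslash\!\!/}$) $\vdash^n\Gamma,\chi\{\phi_L\mathbin{\backslash\!\!/}\phi_R\}\Rightarrow\Delta$ implies $\vdash^n\Gamma,\chi\{\phi_L\}\Rightarrow\Delta$ and $\vdash^n\Gamma,\chi\{\phi_R\}\Rightarrow\Delta$; (R$\mathbin{\backslash\!\!/}$) $\vdash^n\Xi\Rightarrow\chi\{\phi_L\mathbin{\backslash\!\!/}\phi_R\},\Delta$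 implies $\vdash^n\Xi\Rightarrow\chi\{\phi_L\},\Delta$ or $\vdash^n\Xi\Rightarrow\chi\{\phi_R\},\Delta$. (Here $\chi\{\phi_L\mathbin{\backslash\!\!/}\phi_R\}$ is any formula with a designated occurrence of a subformula $\phi_L\mathbin{\backslash\!\!/}\phi_R$ not in the scope of a negation.)
   Context: Fix a countably infinite set $\mathsf{Prop}$ of propositional variables. Classical formulas are generated by $\alpha ::= p \mid \bot \mid \neg\alpha \mid \alpha\wedge\alpha \mid \alpha\vee\alpha$ with $p\in\mathsf{Prop}$. Formulas are generated by $\phi ::= \alpha \mid \phi\wedge\phi \mid \phi\vee\phi \mid \phi\mathbin{\backslash\!\!/}\phi$ where $\alpha$ is classical ($\vee$: split disjunction, $\mathbin{\backslash\!\!/}$: inquisitive disjunction). A sequent is $\Gamma\Rightarrow\Delta$ with $\Gamma,\Delta$ finite multisets of formulas; ''$\Gamma,\Delta$'' denotes multiset union. Deep-inference notation: for a formula $\chi$ with a designated occurrence of a subformula not in the scope of any negation, $\chi\{\eta\}$ denotes the result of replacing that occurrence by $\eta$. The cut-free calculus $\mathsf{GT}^-$ ($\alpha$ ranges over classical formulas, $\Lambda$ over multisets of classical formulas): axioms $\Gamma,p\Rightarrow p,\Delta$ and $\Gamma,\bot\Rightarrow\Delta$; (L$\neg$) from $\Gamma\Rightarrow\alpha,\Delta$ infer $\Gamma,\neg\alpha\Rightarrow\Delta$; (R$\neg$) from $\Gamma,\alpha\Rightarrow\Delta$ infer $\Gamma\Rightarrow\neg\alpha,\Delta$; (L$\wedge$)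 from $\Gamma,\phi,\psi\Rightarrow\Delta$ infer $\Gamma,\phi\wedge\psi\Rightarrow\Delta$; (R$\wedge$) from $\Gamma\Rightarrow\phi,\Lambda$ and $\Gamma\Rightarrow\psi,\Lambda$ infer $\Gamma\Rightarrow\phi\wedge\psi,\Lambda,\Delta$; (L$\vee$) from $\Gamma,\phi\Rightarrow\Lambda$ and $\Gamma,\psi\Rightarrow\Lambda$ infer $\Gamma,\phi\vee\psi\Rightarrow\Lambda,\Delta$; (R$\vee$) from $\Gamma\Rightarrow\phi,\psi,\Delta$ infer $\Gamma\Rightarrow\phi\vee\psi,\Delta$; (L$\mathbin{\backslash\!\!/}$) from $\Gamma,\chi\{\phi_L\}\Rightarrow\Delta$ and $\Gamma,\chi\{\phi_R\}\Rightarrow\Delta$ infer $\Gamma,\chi\{\phi_L\mathbin{\backslash\!\!/}\phi_R\}\Rightarrow\Delta$; (R$\mathbin{\backslash\!\!/}$) from $\Gamma\Rightarrow\chi\{\phi_i\},\Delta$ ($i\in\{L,R\}$) infer $\Gamma\Rightarrow\chi\{\phi_L\mathbin{\backslash\!\!/}\phi_R\},\Delta$. The height of a derivation consisting of a single axiom is $1$; otherwise it is $1$ plus the maximum height of the subderivations of the premises of its last rule. $\vdash^n\Gamma\Rightarrow\Delta$ means there is a $\mathsf{GT}^-$-derivation of $\Gamma\Rightarrow\Delta$ of height at most $n$. *)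

From Stdlib Require Import List Permutation.
Import ListNotations.

Inductive form : Type :=
| Var  : nat -> form
| Bot  : form
| Neg  : form -> form
| And  : form -> form -> form
| Or   : form -> form -> form
| Idis : form -> form -> form.

Fixpoint classical (a : form) : Prop :=
  match a with
  | Var _ | Bot => True
  | Neg b => classical b
  | And b c | Or b c => classical b /\ classical c
  | Idis _ _ => False
  end.

Fixpoint wf (f : form) : Prop :=
  match f with
  | Var _ | Bot => True
  | Neg b => classical b
  | And b c | Or b c | Idis b c => wf b /\ wf c
  end.

Definition wfs (G : list form) : Prop := Forall wf G.
Definition classicals (G : list form) : Prop := Forall classical G.

(* Deep-inference contexts chi{ } : a designated occurrence not in the scope of
   any negation (there is no constructor going under Neg). *)
Inductive ctx : Type :=
| Hole   : ctx
| CAndL  : ctx -> form -> ctx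
| CAndR  : form -> ctx -> ctx
| COrL   : ctx -> form -> ctx
| COrR   : form -> ctx -> ctx
| CIdisL : ctx -> form -> ctx
| CIdisR : form -> ctx -> ctx.

Fixpoint plug (c : ctx) (e : form) : form :=
  match c with
  | Hole => e
  | CAndL c' f => And (plug c' e) f
  | CAndR f c' => And f (plug c' e)
  | COrL c' f => Or (plug c' e) f
  | COrR f c' => Or f (plug c' e)
  | CIdisL c' f => Idis (plug c' e) f
  | CIdisR f c' => Idis f (plug c' e)
  end.

Fixpoint wfc (c : ctx) : Prop :=
  match c with
  | Hole => True
  | CAndL c' f | CAndR f c' | COrL c' f | COrR f c'
  | CIdisL c' f | CIdisR f c' => wfc c' /\ wf f
  end.

(* Sequents Gamma => Delta with multisets represented as lists up to permutation
   (rule der_perm, which does not change the height).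
   [der n G D] : there is a GT^- derivation of G => D of height at most n. *)
Inductive der : nat -> list form -> list form -> Prop :=
| der_perm : forall n G G' D D',
    der n G D -> Permutation G G' -> Permutation D D' -> der n G' D'
| der_ax : forall n G D p,
    der (S n) (Var p :: G) (Var p :: D)
| der_bot : forall n G D,
    der (S n) (Bot :: G) D
| der_Lneg : forall n G D a, classical a ->
    der n G (a :: D) -> der (S n) (Neg a :: G) D
| der_Rneg : forall n G D a, classical a ->
    der n (a :: G) D -> der (S n) G (Neg a :: D)
| der_Land : forall n G D f g,
    der n (f :: g :: G) D -> der (S n) (And f g :: G) D
| der_Rand : forall n G L D f g, classicals L ->
    der n G (f :: L) -> der n G (g :: L) -> der (S n) G (And f g :: L ++ D)
| der_Lor : forall n G L D f g, classicals L ->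
    der n (f :: G) L -> der n (g :: G) L -> der (S n) (Or f g :: G) (L ++ D)
| der_Ror : forall n G D f g,
    der n G (f :: g :: D) -> der (S n) G (Or f g :: D)
| der_Lidis : forall n G D c fL fR,
    der n (plug c fL :: G) D -> der n (plug c fR :: G) D ->
    der (S n) (plug c (Idis fL fR) :: G) D
| der_RidisL : forall n G D c fL fR,
    der n G (plug c fL :: D) -> der (S n) G (plug c (Idis fL fR) :: D)
| der_RidisR : forall n G D c fL fR,
    der n G (plug c fR :: D) -> der (S n) G (plug c (Idis fL fR) :: D).

From Stdlib Require Import List Permutation Lia.
Import ListNotations.

(* Each inversion is proved by induction on the height, looking at the last
   rule.  If the inverted formula is passive in it, the induction hypothesis
   applies to the premises and the rule is applied again; the classical
   context of (R∧) and (L∨) stays classical because only classical formulas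
   are ever inverted inside it.  If the formula is principal, the premises are
   the required sequents up to weakening, except when the last rule acts on
   another occurrence of inquisitive disjunction inside the same formula: the
   two occurrences are then nested or disjoint, and the two rules commute.
   Inverting inquisitive disjunction on the right needs a classical
   antecedent: then the occurrence can be passive in a two-premise rule only
   when it lies in the weakened part of (R∧) or (L∨), so the two premises never
   have to agree on the chosen disjunct. *)

Definition form_eq_dec (x y : form) : {x = y} + {x <> y}.
Proof. decide equality; apply PeanoNat.Nat.eq_dec. Qed.

(* Decides permutation goals by comparing the multiplicity of every formula,
   using the permutation hypotheses as equations between multiplicities. *)
Ltac solve_perm :=
  let x := fresh "x" in
  apply (Permutation_count_occ form_eq_dec); intro x;
  repeat match goal with H : Permutation _ _ |- _ =>
    let h := fresh in
    pose proof (proj1 (Permutation_count_occ form_eq_dec _ _) H x) as h; clear H end;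
  repeat progress (rewrite ?count_occ_app in *; cbn [count_occ] in *);
  repeat match goal with
   | |- context [form_eq_dec ?a ?b] => destruct (form_eq_dec a b)
   | H : context [form_eq_dec ?a ?b] |- _ => destruct (form_eq_dec a b)
   end;
  lia.

Ltac der_perm_from H := eapply der_perm; [exact H | solve_perm | solve_perm].

Ltac apply_rule_perm r := eapply der_perm; [apply r | solve_perm | solve_perm].

Lemma perm_cons_cases {x y : form} {l m} : Permutation (x :: l) (y :: m) ->
  (x = y /\ Permutation l m) \/ exists k, Permutation l (y :: k) /\ Permutation m (x :: k).
Proof.
  intros H.
  destruct (Permutation_in y (Permutation_sym H) (in_eq y m)) as [<- | Hin].
  - left; split; [reflexivity | exact (Permutation_cons_inv H)].
  - right; apply in_split in Hin as (l1 & l2 & ->).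
    exists (l1 ++ l2); split; [solve_perm |].
    apply (Permutation_cons_inv (a := y)); solve_perm.
Qed.

Lemma perm_app_cases {x : form} {l L M} : Permutation (x :: l) (L ++ M) ->
  (exists L1, Permutation L (x :: L1) /\ Permutation l (L1 ++ M)) \/
  (exists M1, Permutation M (x :: M1) /\ Permutation l (L ++ M1)).
Proof.
  intros H.
  destruct (in_app_or _ _ _ (Permutation_in x H (in_eq x l))) as [Hin | Hin];
    apply in_split in Hin as (l1 & l2 & ->); [left | right];
    exists (l1 ++ l2); (split; [solve_perm |]);
    apply (Permutation_cons_inv (a := x)); solve_perm.
Qed.

Lemma classicals_cons_inv {x L L1} : classicals L -> Permutation L (x :: L1) ->
  classical x /\ classicals L1.
Proof. intros HL HP; apply (Permutation_Forall HP) in HL; inversion HL; auto. Qed.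

Lemma der_S n G D : der n G D -> der (S n) G D.
Proof. induction 1; solve [econstructor; eauto]. Qed.

Lemma der_weaken n G D G2 D2 : der n G D -> der n (G ++ G2) (D ++ D2).
Proof.
  intros H; revert G2 D2; induction H; intros G2 D2; simpl.
  - eapply der_perm; [apply IHder | apply Permutation_app_tail; assumption ..].
  - apply der_ax.
  - apply der_bot.
  - apply der_Lneg; [assumption | apply IHder].
  - apply der_Rneg; [assumption | apply IHder].
  - apply der_Land, IHder.
  - rewrite <- app_assoc; apply der_Rand; [assumption | ..].
    + rewrite <- (app_nil_r (f :: L)); apply IHder1.
    + rewrite <- (app_nil_r (g :: L)); apply IHder2.
  - rewrite <- app_assoc; apply der_Lor; [assumption | ..];
      rewrite <- (app_nil_r L); [apply IHder1 | apply IHder2].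
  - apply der_Ror, IHder.
  - apply der_Lidis; [apply IHder1 | apply IHder2].
  - apply der_RidisL, IHder.
  - apply der_RidisR, IHder.
Qed.

Inductive step (n : nat) : list form -> list form -> Prop :=
| step_ax G D p : step n (Var p :: G) (Var p :: D)
| step_bot G D : step n (Bot :: G) D
| step_Lneg G D a : classical a -> der n G (a :: D) -> step n (Neg a :: G) D
| step_Rneg G D a : classical a -> der n (a :: G) D -> step n G (Neg a :: D)
| step_Land G D f g : der n (f :: g :: G) D -> step n (And f g :: G) D
| step_Rand G L D f g : classicals L -> der n G (f :: L) -> der n G (g :: L) ->
    step n G (And f g :: L ++ D)
| step_Lor G L D f g : classicals L -> der n (f :: G) L -> der n (g :: G) L ->
    step n (Or f g :: G) (L ++ D)
| step_Ror G D f g : der n G (f :: g :: D) -> step n G (Or f g :: D)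
| step_Lidis G D c fL fR : der n (plug c fL :: G) D -> der n (plug c fR :: G) D ->
    step n (plug c (Idis fL fR) :: G) D
| step_RidisL G D c fL fR : der n G (plug c fL :: D) -> step n G (plug c (Idis fL fR) :: D)
| step_RidisR G D c fL fR : der n G (plug c fR :: D) -> step n G (plug c (Idis fL fR) :: D).

Lemma der_last_step n G D : der n G D ->
  exists m G0 D0, n = S m /\ step m G0 D0 /\ Permutation G0 G /\ Permutation D0 D.
Proof.
  induction 1;
    try solve [do 3 eexists; split; [reflexivity | split; [| split; reflexivity]];
               econstructor; eassumption].
  destruct IHder as (m & G0 & D0 & -> & Hs & HG & HD).
  exists m, G0, D0; repeat split; [exact Hs | etransitivity; eassumption ..].
Qed.

Lemma der_0 G D : ~ der 0 G D.
Proof. intros H; destruct (der_last_step _ _ _ H) as (m & _ & _ & E & _); discriminate. Qed.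

Lemma der_S_inv {n G D} : der (S n) G D ->
  exists G0 D0, step n G0 D0 /\ Permutation G0 G /\ Permutation D0 D.
Proof.
  intros H; destruct (der_last_step _ _ _ H) as (m & G0 & D0 & E & HS); injection E as <-; eauto.
Qed.

Fixpoint ccomp (c k : ctx) : ctx :=
  match c with
  | Hole => k
  | CAndL c' f => CAndL (ccomp c' k) f
  | CAndR f c' => CAndR f (ccomp c' k)
  | COrL c' f => COrL (ccomp c' k) f
  | COrR f c' => COrR f (ccomp c' k)
  | CIdisL c' f => CIdisL (ccomp c' k) f
  | CIdisR f c' => CIdisR f (ccomp c' k)
  end.

Lemma plug_ccomp c k x : plug (ccomp c k) x = plug c (plug k x).
Proof. induction c; simpl; congruence. Qed.

Lemma plug_Idis_not_classical c fL fR : ~ classical (plug c (Idis fL fR)).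
Proof. induction c; simpl; tauto. Qed.

Lemma ccomp_assoc c k l : ccomp (ccomp c k) l = ccomp c (ccomp k l).
Proof. induction c; simpl; congruence. Qed.

(* In the disjoint case [d y] is [c] with the occurrence of [B] replaced by
   [y], and [d' x] is [c'] with the occurrence of [A] replaced by [x]. *)
Definition nested_or_disjoint (c c' : ctx) (A B : form) : Prop :=
  (exists k, c' = ccomp c k /\ A = plug k B) \/
  (exists k, c = ccomp c' k /\ B = plug k A) \/
  (exists d d' : form -> ctx, c = d B /\ c' = d' A /\
     forall x y, plug (d y) x = plug (d' x) y).

Lemma nested_or_disjoint_ccomp h c c' A B :
  nested_or_disjoint c c' A B -> nested_or_disjoint (ccomp h c) (ccomp h c') A B.
Proof.
  intros [(k & -> & HA) | [(k & -> & HB) | (d & d' & -> & -> & Hd)]].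
  - left; exists k; rewrite ccomp_assoc; auto.
  - right; left; exists k; rewrite ccomp_assoc; auto.
  - right; right; exists (fun y => ccomp h (d y)), (fun x => ccomp h (d' x)).
    repeat split; intros x y; rewrite !plug_ccomp, Hd; reflexivity.
Qed.

Lemma plug_overlap c c' A B : plug c A = plug c' B -> nested_or_disjoint c c' A B.
Proof.
  revert c'; induction c as [| c IH f | f c IH | c IH f | f c IH | c IH f | f c IH];
    intros c' E.
  { left; exists c'; auto. }
  all: destruct c' as [| c' f' | f' c' | c' f' | f' c' | c' f' | f' c'];
    simpl in E; try discriminate E.
  all: try solve [right; left; eexists; split; [reflexivity | symmetry; exact E]].
  all: injection E as E1 E2; subst.
  all: lazymatch goal with
    | |- nested_or_disjoint (?F ?c ?f) (?F ?c' ?f) _ _ =>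
        apply (nested_or_disjoint_ccomp (F Hole f)); auto
    | |- nested_or_disjoint (?F ?f ?c) (?F ?f ?c') _ _ =>
        apply (nested_or_disjoint_ccomp (F f Hole)); auto
    | |- nested_or_disjoint (?F ?c (plug ?c' ?B)) (?F' (plug ?c ?A) ?c') _ _ =>
        right; right; exists (fun y => F c (plug c' y)), (fun x => F' (plug c x) c')
    | |- nested_or_disjoint (?F (plug ?c' ?B) ?c) (?F' ?c' (plug ?c ?A)) _ _ =>
        right; right; exists (fun y => F (plug c' y) c), (fun x => F' c' (plug c x))
    end.
  all: repeat split.
Qed.

(* [principal_left n G D X]: the last rule of a derivation of height [S n] of
   [X, G => D] has [X] as principal formula (and similarly on the right). *)
Inductive principal_left (n : nat) (G D : list form) : form -> Prop :=
| pl_var p : In (Var p) D -> principal_left n G D (Var p)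
| pl_bot : principal_left n G D Bot
| pl_neg a : classical a -> der n G (a :: D) -> principal_left n G D (Neg a)
| pl_and f g : der n (f :: g :: G) D -> principal_left n G D (And f g)
| pl_or f g L D0 : classicals L -> Permutation (L ++ D0) D ->
    der n (f :: G) L -> der n (g :: G) L -> principal_left n G D (Or f g)
| pl_idis c fL fR : der n (plug c fL :: G) D -> der n (plug c fR :: G) D ->
    principal_left n G D (plug c (Idis fL fR)).

Inductive principal_right (n : nat) (G D : list form) : form -> Prop :=
| pr_var p : In (Var p) G -> principal_right n G D (Var p)
| pr_neg a : classical a -> der n (a :: G) D -> principal_right n G D (Neg a)
| pr_and f g L D0 : classicals L -> Permutation (L ++ D0) D ->
    der n G (f :: L) -> der n G (g :: L) -> principal_right n G D (And f g)
| pr_or f g : der n G (f :: g :: D) -> principal_right n G D (Or f g)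
| pr_idis c fL fR : der n G (plug c fL :: D) \/ der n G (plug c fR :: D) ->
    principal_right n G D (plug c (Idis fL fR)).

Lemma der_passive_left n X G D YL ZR : classicals ZR ->
  (forall G D, der n (X :: G) D -> der n (YL ++ G) (ZR ++ D)) ->
  der (S n) (X :: G) D -> der (S n) (YL ++ G) (ZR ++ D) \/ principal_left n G D X.
Proof.
  intros HZ IH H.
  destruct (der_S_inv H) as (G0 & D0 & Hs & HG & HD).
  destruct Hs as [G1 D1 p | G1 D1 | G1 D1 a Ha Hd | G1 D1 a Ha Hd | G1 D1 f g Hd
                 | G1 L D1 f g HL Hd1 Hd2 | G1 L D1 f g HL Hd1 Hd2 | G1 D1 f g Hd
                 | G1 D1 c fL fR Hd1 Hd2 | G1 D1 c fL fR Hd | G1 D1 c fL fR Hd].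
  - destruct (perm_cons_cases HG) as [[<- _] | (k & Hk & HGk)].
    + right; constructor; apply (Permutation_in _ HD), in_eq.
    + left; apply_rule_perm (der_ax n (YL ++ k) (ZR ++ D1) p).
  - destruct (perm_cons_cases HG) as [[<- _] | (k & Hk & HGk)].
    + right; constructor.
    + left; apply_rule_perm (der_bot n (YL ++ k) (ZR ++ D)).
  - destruct (perm_cons_cases HG) as [[<- HG1] | (k & Hk & HGk)].
    + right; constructor; [exact Ha | der_perm_from Hd].
    + left; apply_rule_perm (der_Lneg n (YL ++ k) (ZR ++ D) a); [exact Ha |].
      der_perm_from (IH k (a :: D) ltac:(der_perm_from Hd)).
  - left; apply_rule_perm (der_Rneg n (YL ++ G) (ZR ++ D1) a); [exact Ha |].
    der_perm_from (IH (a :: G) D1 ltac:(der_perm_from Hd)).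
  - destruct (perm_cons_cases HG) as [[<- HG1] | (k & Hk & HGk)].
    + right; constructor; der_perm_from Hd.
    + left; apply_rule_perm (der_Land n (YL ++ k) (ZR ++ D) f g).
      der_perm_from (IH (f :: g :: k) D ltac:(der_perm_from Hd)).
  - left; apply_rule_perm (der_Rand n (YL ++ G) (ZR ++ L) D1 f g);
      [apply Forall_app; split; auto | ..].
    + der_perm_from (IH G (f :: L) ltac:(der_perm_from Hd1)).
    + der_perm_from (IH G (g :: L) ltac:(der_perm_from Hd2)).
  - destruct (perm_cons_cases HG) as [[<- HG1] | (k & Hk & HGk)].
    + right; apply (pl_or _ _ _ f g L D1); [exact HL | exact HD | der_perm_from Hd1 | der_perm_from Hd2].
    + left; apply_rule_perm (der_Lor n (YL ++ k) (ZR ++ L) D1 f g); [apply Forall_app; split; auto | ..].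
      * der_perm_from (IH (f :: k) L ltac:(der_perm_from Hd1)).
      * der_perm_from (IH (g :: k) L ltac:(der_perm_from Hd2)).
  - left; apply_rule_perm (der_Ror n (YL ++ G) (ZR ++ D1) f g).
    der_perm_from (IH G (f :: g :: D1) ltac:(der_perm_from Hd)).
  - destruct (perm_cons_cases HG) as [[<- HG1] | (k & Hk & HGk)].
    + right; constructor; der_perm_from Hd1 || der_perm_from Hd2.
    + left; apply_rule_perm (der_Lidis n (YL ++ k) (ZR ++ D) c fL fR).
      * der_perm_from (IH (plug c fL :: k) D ltac:(der_perm_from Hd1)).
      * der_perm_from (IH (plug c fR :: k) D ltac:(der_perm_from Hd2)).
  - left; apply_rule_perm (der_RidisL n (YL ++ G) (ZR ++ D1) c fL fR).
    der_perm_from (IH G (plug c fL :: D1) ltac:(der_perm_from Hd)).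
  - left; apply_rule_perm (der_RidisR n (YL ++ G) (ZR ++ D1) c fL fR).
    der_perm_from (IH G (plug c fR :: D1) ltac:(der_perm_from Hd)).
Qed.

Lemma der_passive_right n X G D YL ZR : (classical X -> classicals ZR) ->
  (forall G D, der n G (X :: D) -> der n (YL ++ G) (ZR ++ D)) ->
  der (S n) G (X :: D) -> der (S n) (YL ++ G) (ZR ++ D) \/ principal_right n G D X.
Proof.
  intros HZ IH H.
  destruct (der_S_inv H) as (G0 & D0 & Hs & HG & HD).
  destruct Hs as [G1 D1 p | G1 D1 | G1 D1 a Ha Hd | G1 D1 a Ha Hd | G1 D1 f g Hd
                 | G1 L D1 f g HL Hd1 Hd2 | G1 L D1 f g HL Hd1 Hd2 | G1 D1 f g Hd
                 | G1 D1 c fL fR Hd1 Hd2 | G1 D1 c fL fR Hd | G1 D1 c fL fR Hd].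
  - destruct (perm_cons_cases HD) as [[<- _] | (k & Hk & HDk)].
    + right; constructor; apply (Permutation_in _ HG), in_eq.
    + left; apply_rule_perm (der_ax n (YL ++ G1) (ZR ++ k) p).
  - left; apply_rule_perm (der_bot n (YL ++ G1) (ZR ++ D)).
  - left; apply_rule_perm (der_Lneg n (YL ++ G1) (ZR ++ D) a); [exact Ha |].
    der_perm_from (IH G1 (a :: D) ltac:(der_perm_from Hd)).
  - destruct (perm_cons_cases HD) as [[<- HD1] | (k & Hk & HDk)].
    + right; constructor; [exact Ha | der_perm_from Hd].
    + left; apply_rule_perm (der_Rneg n (YL ++ G) (ZR ++ k) a); [exact Ha |].
      der_perm_from (IH (a :: G) k ltac:(der_perm_from Hd)).
  - left; apply_rule_perm (der_Land n (YL ++ G1) (ZR ++ D) f g).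
    der_perm_from (IH (f :: g :: G1) D ltac:(der_perm_from Hd)).
  - destruct (perm_cons_cases HD) as [[<- HD1] | (k & Hk & HDk)].
    + right; apply (pr_and _ _ _ f g L D1); [exact HL | exact HD1 | der_perm_from Hd1 | der_perm_from Hd2].
    + left; destruct (perm_app_cases (Permutation_sym Hk)) as [(L1 & HL1 & Hk1) | (M1 & HM1 & Hk1)].
      * destruct (classicals_cons_inv HL HL1) as [HX HL1c]; specialize (HZ HX).
        apply_rule_perm (der_Rand n (YL ++ G) (ZR ++ L1) D1 f g); [apply Forall_app; split; auto | ..].
        -- der_perm_from (IH G (f :: L1) ltac:(der_perm_from Hd1)).
        -- der_perm_from (IH G (g :: L1) ltac:(der_perm_from Hd2)).
      * apply_rule_perm (der_Rand n (YL ++ G) L (ZR ++ M1) f g); [exact HL | ..].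
        -- der_perm_from (der_weaken n G1 (f :: L) YL [] Hd1).
        -- der_perm_from (der_weaken n G1 (g :: L) YL [] Hd2).
  - left; destruct (perm_app_cases (Permutation_sym HD)) as [(L1 & HL1 & Hk1) | (M1 & HM1 & Hk1)].
    + destruct (classicals_cons_inv HL HL1) as [HX HL1c]; specialize (HZ HX).
      apply_rule_perm (der_Lor n (YL ++ G1) (ZR ++ L1) D1 f g); [apply Forall_app; split; auto | ..].
      * der_perm_from (IH (f :: G1) L1 ltac:(der_perm_from Hd1)).
      * der_perm_from (IH (g :: G1) L1 ltac:(der_perm_from Hd2)).
    + apply_rule_perm (der_Lor n (YL ++ G1) L (ZR ++ M1) f g); [exact HL | ..].
      * der_perm_from (der_weaken n (f :: G1) L YL [] Hd1).
      * der_perm_from (der_weaken n (g :: G1) L YL [] Hd2).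
  - destruct (perm_cons_cases HD) as [[<- HD1] | (k & Hk & HDk)].
    + right; constructor; der_perm_from Hd.
    + left; apply_rule_perm (der_Ror n (YL ++ G) (ZR ++ k) f g).
      der_perm_from (IH G (f :: g :: k) ltac:(der_perm_from Hd)).
  - left; apply_rule_perm (der_Lidis n (YL ++ G1) (ZR ++ D) c fL fR).
    + der_perm_from (IH (plug c fL :: G1) D ltac:(der_perm_from Hd1)).
    + der_perm_from (IH (plug c fR :: G1) D ltac:(der_perm_from Hd2)).
  - destruct (perm_cons_cases HD) as [[<- HD1] | (k & Hk & HDk)].
    + right; constructor; left; der_perm_from Hd.
    + left; apply_rule_perm (der_RidisL n (YL ++ G) (ZR ++ k) c fL fR).
      der_perm_from (IH G (plug c fL :: k) ltac:(der_perm_from Hd)).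
  - destruct (perm_cons_cases HD) as [[<- HD1] | (k & Hk & HDk)].
    + right; constructor; right; der_perm_from Hd.
    + left; apply_rule_perm (der_RidisR n (YL ++ G) (ZR ++ k) c fL fR).
      der_perm_from (IH G (plug c fR :: k) ltac:(der_perm_from Hd)).
Qed.

Lemma der_passive_right_choice n X Y1 Y2 G D : ~ classical X -> classicals G ->
  (forall G D, classicals G -> der n G (X :: D) ->
     exists Y, (Y = Y1 \/ Y = Y2) /\ der n G (Y :: D)) ->
  der (S n) G (X :: D) ->
  (exists Y, (Y = Y1 \/ Y = Y2) /\ der (S n) G (Y :: D)) \/ principal_right n G D X.
Proof.
  intros HX HG0 IH H.
  destruct (der_S_inv H) as (G0 & D0 & Hs & HG & HD).
  assert (HG0' := Permutation_Forall (Permutation_sym HG) HG0).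
  destruct Hs as [G1 D1 p | G1 D1 | G1 D1 a Ha Hd | G1 D1 a Ha Hd | G1 D1 f g Hd
                 | G1 L D1 f g HL Hd1 Hd2 | G1 L D1 f g HL Hd1 Hd2 | G1 D1 f g Hd
                 | G1 D1 c fL fR Hd1 Hd2 | G1 D1 c fL fR Hd | G1 D1 c fL fR Hd].
  - destruct (perm_cons_cases HD) as [[<- _] | (k & Hk & HDk)].
    + right; constructor; apply (Permutation_in _ HG), in_eq.
    + left; exists Y1; split; [now left | apply_rule_perm (der_ax n G1 (Y1 :: k) p)].
  - left; exists Y1; split; [now left | apply_rule_perm (der_bot n G1 (Y1 :: D))].
  - pose proof (Forall_inv_tail HG0') as HG1.
    destruct (IH G1 (a :: D) HG1 ltac:(der_perm_from Hd)) as (Y & HY & Hi).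
    left; exists Y; split; [exact HY |].
    apply_rule_perm (der_Lneg n G1 (Y :: D) a); [exact Ha | der_perm_from Hi].
  - destruct (perm_cons_cases HD) as [[<- HD1] | (k & Hk & HDk)].
    + right; constructor; [exact Ha | der_perm_from Hd].
    + destruct (IH (a :: G) k (Forall_cons _ Ha HG0) ltac:(der_perm_from Hd)) as (Y & HY & Hi).
      left; exists Y; split; [exact HY |].
      apply_rule_perm (der_Rneg n G (Y :: k) a); [exact Ha | der_perm_from Hi].
  - destruct (Forall_inv HG0') as [Hf Hg]; pose proof (Forall_inv_tail HG0') as HG1.
    destruct (IH (f :: g :: G1) D (Forall_cons _ Hf (Forall_cons _ Hg HG1))
                ltac:(der_perm_from Hd)) as (Y & HY & Hi).
    left; exists Y; split; [exact HY |].
    apply_rule_perm (der_Land n G1 (Y :: D) f g); der_perm_from Hi.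
  - destruct (perm_cons_cases HD) as [[<- HD1] | (k & Hk & HDk)].
    + right; apply (pr_and _ _ _ f g L D1); [exact HL | exact HD1 | der_perm_from Hd1 | der_perm_from Hd2].
    + destruct (perm_app_cases (Permutation_sym Hk)) as [(L1 & HL1 & _) | (M1 & HM1 & Hk1)].
      * exfalso; exact (HX (proj1 (classicals_cons_inv HL HL1))).
      * left; exists Y1; split; [now left |].
        apply_rule_perm (der_Rand n G L (Y1 :: M1) f g); [exact HL | der_perm_from Hd1 | der_perm_from Hd2].
  - destruct (perm_app_cases (Permutation_sym HD)) as [(L1 & HL1 & _) | (M1 & HM1 & Hk1)].
    + exfalso; exact (HX (proj1 (classicals_cons_inv HL HL1))).
    + left; exists Y1; split; [now left |].
      apply_rule_perm (der_Lor n G1 L (Y1 :: M1) f g); [exact HL | exact Hd1 | exact Hd2].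
  - destruct (perm_cons_cases HD) as [[<- HD1] | (k & Hk & HDk)].
    + right; constructor; der_perm_from Hd.
    + destruct (IH G (f :: g :: k) HG0 ltac:(der_perm_from Hd)) as (Y & HY & Hi).
      left; exists Y; split; [exact HY |].
      apply_rule_perm (der_Ror n G (Y :: k) f g); der_perm_from Hi.
  - exfalso; exact (plug_Idis_not_classical _ _ _ (Forall_inv HG0')).
  - destruct (perm_cons_cases HD) as [[<- HD1] | (k & Hk & HDk)].
    + right; constructor; left; der_perm_from Hd.
    + destruct (IH G (plug c fL :: k) HG0 ltac:(der_perm_from Hd)) as (Y & HY & Hi).
      left; exists Y; split; [exact HY |].
      apply_rule_perm (der_RidisL n G (Y :: k) c fL fR); der_perm_from Hi.
  - destruct (perm_cons_cases HD) as [[<- HD1] | (k & Hk & HDk)].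
    + right; constructor; right; der_perm_from Hd.
    + destruct (IH G (plug c fR :: k) HG0 ltac:(der_perm_from Hd)) as (Y & HY & Hi).
      left; exists Y; split; [exact HY |].
      apply_rule_perm (der_RidisR n G (Y :: k) c fL fR); der_perm_from Hi.
Qed.

Ltac plug_discriminate :=
  match goal with
  | E : plug ?c (Idis _ _) = _ |- _ => destruct c; discriminate E
  | E : _ = plug ?c (Idis _ _) |- _ => destruct c; discriminate E
  end.

Lemma der_Lneg_inv n a G D : classical a -> der n (Neg a :: G) D -> der n G (a :: D).
Proof.
  intros Ha; revert G D; induction n as [| n IH]; intros G D H; [exfalso; exact (der_0 _ _ H) |].
  destruct (der_passive_left n (Neg a) G D [] [a]) as [Hd | Hp];
    [repeat constructor; exact Ha | exact IH | exact H | exact Hd |].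
  inversion Hp; [now apply der_S | plug_discriminate].
Qed.

Lemma der_Rneg_inv n a G D : der n G (Neg a :: D) -> der n (a :: G) D.
Proof.
  revert G D; induction n as [| n IH]; intros G D H; [exfalso; exact (der_0 _ _ H) |].
  destruct (der_passive_right n (Neg a) G D [a] []) as [Hd | Hp];
    [constructor | exact IH | exact H | exact Hd |].
  inversion Hp; [now apply der_S | plug_discriminate].
Qed.

Lemma der_Land_inv n f g G D : der n (And f g :: G) D -> der n (f :: g :: G) D.
Proof.
  revert f g G D; induction n as [| n IH]; intros f g G D H; [exfalso; exact (der_0 _ _ H) |].
  destruct (der_passive_left n (And f g) G D [f; g] []) as [Hd | Hp];
    [constructor | exact (IH f g) | exact H | exact Hd |].
  inversion Hp as [| | | ? ? Hd | | c fL fR Hd1 Hd2 E]; [now apply der_S |].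
  destruct c as [| c h | h c | | | |]; simpl in *; try discriminate E; injection E as <- <-.
  - apply der_Lidis; apply IH; assumption.
  - apply_rule_perm (der_Lidis n (h :: G) D c fL fR);
      [der_perm_from (IH _ _ _ _ Hd1) | der_perm_from (IH _ _ _ _ Hd2)].
Qed.

Lemma der_Rand_inv n f g G D : der n G (And f g :: D) -> der n G (f :: D) /\ der n G (g :: D).
Proof.
  revert f g G D; induction n as [| n IH]; intros f g G D H; [exfalso; exact (der_0 _ _ H) |].
  assert (Hpr : principal_right n G D (And f g) -> der (S n) G (f :: D) /\ der (S n) G (g :: D)).
  { intros Hp; inversion Hp as [| | ? ? L D0 HL HP Hd1 Hd2 | | c fL fR Hd E].
    - split; apply der_S; [der_perm_from (der_weaken n G (f :: L) [] D0 Hd1)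
                          | der_perm_from (der_weaken n G (g :: L) [] D0 Hd2)].
    - destruct c as [| c h | h c | | | |]; simpl in *; try discriminate E; injection E as <- <-;
        destruct Hd as [Hd | Hd]; apply IH in Hd as [Hd1 Hd2];
        split; eauto using der_S, der_RidisL, der_RidisR. }
  split.
  - destruct (der_passive_right n (And f g) G D [] [f]) as [Hd | Hp];
      [intros [Hf _]; repeat constructor; exact Hf | intros ? ? Hd; exact (proj1 (IH _ _ _ _ Hd))
      | exact H | exact Hd | exact (proj1 (Hpr Hp))].
  - destruct (der_passive_right n (And f g) G D [] [g]) as [Hd | Hp];
      [intros [_ Hg]; repeat constructor; exact Hg | intros ? ? Hd; exact (proj2 (IH _ _ _ _ Hd))
      | exact H | exact Hd | exact (proj2 (Hpr Hp))].
Qed.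

Lemma der_Lor_inv n f g G D : der n (Or f g :: G) D -> der n (f :: G) D /\ der n (g :: G) D.
Proof.
  revert f g G D; induction n as [| n IH]; intros f g G D H; [exfalso; exact (der_0 _ _ H) |].
  assert (Hpr : principal_left n G D (Or f g) -> der (S n) (f :: G) D /\ der (S n) (g :: G) D).
  { intros Hp; inversion Hp as [| | | | ? ? L D0 HL HP Hd1 Hd2 | c fL fR Hd1 Hd2 E].
    - split; apply der_S; [der_perm_from (der_weaken n (f :: G) L [] D0 Hd1)
                          | der_perm_from (der_weaken n (g :: G) L [] D0 Hd2)].
    - destruct c as [| | | c h | h c | |]; simpl in *; try discriminate E; injection E as <- <-;
        apply IH in Hd1 as [A1 A2]; apply IH in Hd2 as [B1 B2];
        split; eauto using der_S, der_Lidis. }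
  split.
  - destruct (der_passive_left n (Or f g) G D [f] []) as [Hd | Hp];
      [constructor | intros ? ? Hd; exact (proj1 (IH _ _ _ _ Hd))
      | exact H | exact Hd | exact (proj1 (Hpr Hp))].
  - destruct (der_passive_left n (Or f g) G D [g] []) as [Hd | Hp];
      [constructor | intros ? ? Hd; exact (proj2 (IH _ _ _ _ Hd))
      | exact H | exact Hd | exact (proj2 (Hpr Hp))].
Qed.

Lemma der_Ror_inv n f g G D : der n G (Or f g :: D) -> der n G (f :: g :: D).
Proof.
  revert f g G D; induction n as [| n IH]; intros f g G D H; [exfalso; exact (der_0 _ _ H) |].
  destruct (der_passive_right n (Or f g) G D [] [f; g]) as [Hd | Hp];
    [intros [Hf Hg]; repeat constructor; assumption | exact (IH f g) | exact H | exact Hd |].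
  inversion Hp as [| | | ? ? Hd | c fL fR Hd E]; [now apply der_S |].
  destruct c as [| | | c h | h c | |]; simpl in *; try discriminate E; injection E as <- <-;
    destruct Hd as [Hd | Hd]; apply IH in Hd.
  - apply der_RidisL, Hd.
  - apply der_RidisR, Hd.
  - apply_rule_perm (der_RidisL n G (h :: D) c fL fR); der_perm_from Hd.
  - apply_rule_perm (der_RidisR n G (h :: D) c fL fR); der_perm_from Hd.
Qed.

Lemma der_Lidis_overlap n c c' fL fR gL gR G D :
  (forall c fL fR G D, der n (plug c (Idis fL fR) :: G) D ->
     der n (plug c fL :: G) D /\ der n (plug c fR :: G) D) ->
  plug c (Idis fL fR) = plug c' (Idis gL gR) ->
  der n (plug c' gL :: G) D -> der n (plug c' gR :: G) D ->
  der (S n) (plug c fL :: G) D /\ der (S n) (plug c fR :: G) D.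
Proof.
  intros IH E H1 H2.
  destruct (plug_overlap _ _ _ _ E) as [(k & -> & Hk) | [(k & -> & Hk) | (d & d' & -> & -> & Hd)]].
  - rewrite plug_ccomp in H1, H2.
    destruct k as [| | | | | k h | h k]; simpl in Hk; try discriminate Hk; injection Hk as -> ->.
    + split; apply der_S; assumption.
    + apply IH in H1 as [A1 A2]; apply IH in H2 as [B1 _].
      split; [rewrite <- plug_ccomp in A1, B1 |- *; apply der_Lidis; assumption | apply der_S, A2].
    + apply IH in H1 as [A1 A2]; apply IH in H2 as [_ B2].
      split; [apply der_S, A1 | rewrite <- plug_ccomp in A2, B2 |- *; apply der_Lidis; assumption].
  - rewrite !plug_ccomp.
    destruct k as [| | | | | k h | h k]; simpl in Hk; try discriminate Hk; injection Hk as -> ->.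
    + split; apply der_S; assumption.
    + rewrite <- plug_ccomp in H1; apply IH in H1 as [A1 A2]; rewrite plug_ccomp in A1, A2.
      split; apply der_Lidis; assumption.
    + rewrite <- plug_ccomp in H2; apply IH in H2 as [B1 B2]; rewrite plug_ccomp in B1, B2.
      split; apply der_Lidis; assumption.
  - rewrite <- Hd in H1, H2; apply IH in H1 as [A1 A2]; apply IH in H2 as [B1 B2].
    rewrite Hd in A1, A2, B1, B2; rewrite !Hd.
    split; apply der_Lidis; assumption.
Qed.

Lemma der_Ridis_overlap n c c' fL fR gL gR G D :
  (forall c fL fR D, der n G (plug c (Idis fL fR) :: D) ->
     der n G (plug c fL :: D) \/ der n G (plug c fR :: D)) ->
  plug c (Idis fL fR) = plug c' (Idis gL gR) ->
  der n G (plug c' gL :: D) \/ der n G (plug c' gR :: D) ->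
  der (S n) G (plug c fL :: D) \/ der (S n) G (plug c fR :: D).
Proof.
  intros IH E H.
  destruct (plug_overlap _ _ _ _ E) as [(k & -> & Hk) | [(k & -> & Hk) | (d & d' & -> & -> & Hd)]].
  - rewrite !plug_ccomp in H.
    destruct k as [| | | | | k h | h k]; simpl in Hk; try discriminate Hk; injection Hk as -> ->.
    + destruct H; [left | right]; apply der_S; assumption.
    + destruct H as [H | H]; apply IH in H as [H | H]; try (right; apply der_S, H);
        left; rewrite <- plug_ccomp in H |- *; eauto using der_RidisL, der_RidisR.
    + destruct H as [H | H]; apply IH in H as [H | H]; try (left; apply der_S, H);
        right; rewrite <- plug_ccomp in H |- *; eauto using der_RidisL, der_RidisR.
  - rewrite !plug_ccomp.
    destruct k as [| | | | | k h | h k]; simpl in Hk; try discriminate Hk; injection Hk as -> ->.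
    + destruct H; [left | right]; apply der_S; assumption.
    + destruct H as [H | H]; [| left; apply der_RidisR, H].
      rewrite <- plug_ccomp in H; apply IH in H as [H | H]; rewrite plug_ccomp in H;
        [left | right]; apply der_RidisL, H.
    + destruct H as [H | H]; [left; apply der_RidisL, H |].
      rewrite <- plug_ccomp in H; apply IH in H as [H | H]; rewrite plug_ccomp in H;
        [left | right]; apply der_RidisR, H.
  - rewrite !Hd; destruct H as [H | H]; rewrite <- Hd in H;
      apply IH in H as [H | H]; rewrite Hd in H; eauto using der_RidisL, der_RidisR.
Qed.

Lemma der_Lidis_inv n c fL fR G D : der n (plug c (Idis fL fR) :: G) D ->
  der n (plug c fL :: G) D /\ der n (plug c fR :: G) D.
Proof.
  revert c fL fR G D; induction n as [| n IH]; intros c fL fR G D H;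
    [exfalso; exact (der_0 _ _ H) |].
  assert (Hpr : principal_left n G D (plug c (Idis fL fR)) ->
                der (S n) (plug c fL :: G) D /\ der (S n) (plug c fR :: G) D).
  { intros Hp; inversion Hp as [| | | f g Hd E | f g L D0 HL HP Hd1 Hd2 E | c' gL gR Hd1 Hd2 E].
    1-3: plug_discriminate.
    - destruct c as [| c h | h c | | | |]; simpl in *; try discriminate E; injection E as -> ->.
      + apply IH in Hd as [A1 A2]; split; apply der_Land; assumption.
      + destruct (IH c fL fR (h :: G) D ltac:(der_perm_from Hd)) as [A1 A2].
        split; apply der_Land; [der_perm_from A1 | der_perm_from A2].
    - destruct c as [| | | c h | h c | |]; simpl in *; try discriminate E; injection E as -> ->.
      + apply IH in Hd1 as [A1 A2]; split;
          [apply_rule_perm (der_Lor n G L D0 (plug c fL) h)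
          | apply_rule_perm (der_Lor n G L D0 (plug c fR) h)]; assumption.
      + apply IH in Hd2 as [A1 A2]; split;
          [apply_rule_perm (der_Lor n G L D0 h (plug c fL))
          | apply_rule_perm (der_Lor n G L D0 h (plug c fR))]; assumption.
    - exact (der_Lidis_overlap n c c' fL fR gL gR G D IH (eq_sym E) Hd1 Hd2). }
  split.
  - destruct (der_passive_left n (plug c (Idis fL fR)) G D [plug c fL] []) as [Hd | Hp];
      [constructor | intros ? ? Hd; exact (proj1 (IH _ _ _ _ _ Hd))
      | exact H | exact Hd | exact (proj1 (Hpr Hp))].
  - destruct (der_passive_left n (plug c (Idis fL fR)) G D [plug c fR] []) as [Hd | Hp];
      [constructor | intros ? ? Hd; exact (proj2 (IH _ _ _ _ _ Hd))
      | exact H | exact Hd | exact (proj2 (Hpr Hp))].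
Qed.

Lemma der_Ridis_inv n c fL fR G D : classicals G -> der n G (plug c (Idis fL fR) :: D) ->
  der n G (plug c fL :: D) \/ der n G (plug c fR :: D).
Proof.
  revert c fL fR G D; induction n as [| n IH]; intros c fL fR G D HG H;
    [exfalso; exact (der_0 _ _ H) |].
  destruct (der_passive_right_choice n (plug c (Idis fL fR)) (plug c fL) (plug c fR) G D)
    as [(Y & [-> | ->] & HY) | Hp];
    [apply plug_Idis_not_classical | exact HG | | exact H | left; exact HY | right; exact HY |].
  { intros G' D' HG' H'; destruct (IH c fL fR G' D' HG' H'); eauto. }
  inversion Hp as [| | f g L D0 HL HP Hd1 Hd2 E | f g Hd E | c' gL gR Hd E].
  1-2: plug_discriminate.
  - destruct c as [| c h | h c | | | |]; simpl in *; try discriminate E; injection E as -> ->.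
    + destruct (IH c fL fR G L HG Hd1) as [A | A]; [left | right].
      * apply_rule_perm (der_Rand n G L D0 (plug c fL) h); assumption.
      * apply_rule_perm (der_Rand n G L D0 (plug c fR) h); assumption.
    + destruct (IH c fL fR G L HG Hd2) as [A | A]; [left | right].
      * apply_rule_perm (der_Rand n G L D0 h (plug c fL)); assumption.
      * apply_rule_perm (der_Rand n G L D0 h (plug c fR)); assumption.
  - destruct c as [| | | c h | h c | |]; simpl in *; try discriminate E; injection E as -> ->.
    + destruct (IH c fL fR G (h :: D) HG Hd) as [A | A]; [left | right]; apply der_Ror, A.
    + destruct (IH c fL fR G (h :: D) HG ltac:(der_perm_from Hd)) as [A | A]; [left | right].
      * apply_rule_perm (der_Ror n G D h (plug c fL)); der_perm_from A.
      * apply_rule_perm (der_Ror n G D h (plug c fR)); der_perm_from A.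
  - exact (der_Ridis_overlap n c c' fL fR gL gR G D (fun c fL fR D => IH c fL fR G D HG) (eq_sym E) Hd).
Qed.

Theorem lemma4p2 :
  forall (n : nat) (G D Xi : list form) (f g a fL fR : form) (c : ctx),
    1 <= n ->
    wfs G -> wfs D -> classicals Xi -> wf f -> wf g -> classical a ->
    wf fL -> wf fR -> wfc c ->
    (* (L neg) *)
    (der n (Neg a :: G) D -> der n G (a :: D)) /\
    (* (R neg) *)
    (der n G (Neg a :: D) -> der n (a :: G) D) /\
    (* (L and) *)
    (der n (And f g :: G) D -> der n (f :: g :: G) D) /\
    (* (R and) *)
    (der n G (And f g :: D) -> der n G (f :: D) /\ der n G (g :: D)) /\
    (* (L or) *)
    (der n (Or f g :: G) D -> der n (f :: G) D /\ der n (g :: G) D) /\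
    (* (R or) *)
    (der n G (Or f g :: D) -> der n G (f :: g :: D)) /\
    (* (L idis) *)
    (der n (plug c (Idis fL fR) :: G) D ->
       der n (plug c fL :: G) D /\ der n (plug c fR :: G) D) /\
    (* (R idis) *)
    (der n Xi (plug c (Idis fL fR) :: D) ->
       der n Xi (plug c fL :: D) \/ der n Xi (plug c fR :: D)).
Proof.
  intros n G D Xi f g a fL fR c _ _ _ HXi _ _ Ha _ _ _.
  split; [apply der_Lneg_inv, Ha |].
  split; [apply der_Rneg_inv |].
  split; [apply der_Land_inv |].
  split; [apply der_Rand_inv |].
  split; [apply der_Lor_inv |].
  split; [apply der_Ror_inv |].
  split; [apply der_Lidis_inv | apply der_Ridis_inv, HXi].
Qed.
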